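(* Let $n\ge 6$ and let $CTG_n$ be the set of chemical tricyclic graphs on $n$ vertices. Define the following subsets of $CTG_n$ (in each, all $m_{i,j}$ not listed are $0$): for $j=0,1,\dots,5$, $\gamma_{9+j}$ is the set of $G\in CTG_n$ with $n_4=0,n_3=4,n_2=n-4,n_1=0$, $m_{2,3}=2+2j$, $m_{3,3}=5-j$, $m_{2,2}=n-5-j$; and $\gamma_{65}$ is the set of $G\in CTG_n$ with $n_4=0,n_3=5,n_2=n-6,n_1=1$, $m_{1,2}=1$, $m_{2,3}=1$, $m_{3,3}=7$, $m_{2,2}=n-7$. Let $G_1\in\gamma_9$, $G_2\in\gamma_{10}$, $G_3\in\gamma_{11}$, $G_4\in\gamma_{12}$, $G_5\in\gamma_{13}$, $G_6\in\gamma_{14}$, $G_7\in\gamma_{65}$, and let $G\in CTG_n$ not belong to $\gamma_9\cup\cdots\cup\gamma_{14}\cup\gamma_{65}$. Then $SO_{red}(G_1)<SO_{red}(G_2)<\cdots<SO_{red}(G_7)<SO_{red}(G)$.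
   Context: All graphs are simple and connected. A chemical graph is a graph with maximum degree at most $4$; a tricyclic graph is a connected graph with $n$ vertices and $n+2$ edges. $d_G(u)$ is the degree of $u$, $n_i$ the number of vertices of degree $i$, and $m_{i,j}$ the number of edges joining a vertex of degree $i$ to a vertex of degree $j$. The reduced Sombor index is $SO_{red}(G)=\sum_{uv\in E(G)}\sqrt{(d_G(u)-1)^2+(d_G(v)-1)^2}$. *)

(* Simple graphs on vertex set 'I_n given by a symmetric,
   irreflexive relation; reals are any real closed field R. *)
From HB Require Import structures.
From mathcomp Require Import all_boot all_order all_algebra.
Set Implicit Arguments. Unset Strict Implicit. Unset Printing Implicit Defensive.
Import Order.TTheory GRing.Theory Num.Theory.

Local Open Scope ring_scope.
Section Graphs.
Variable n : nat.
Implicit Types (e : rel 'I_n).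

Definition simple_graph e := symmetric e /\ irreflexive e.

Definition gconnected e := forall u v : 'I_n, connect e u v.

Definition deg e (u : 'I_n) : nat := #|[set v | e u v]|.

Definition edgeset e : {set 'I_n * 'I_n} :=
  [set p | e p.1 p.2 && (p.1 < p.2)%N].

Definition nedges e : nat := #|edgeset e|.

Definition nverts_deg e (i : nat) : nat := #|[set u | deg e u == i]|.

Definition medges e (i j : nat) : nat :=
  #|[set p in edgeset e |
      ((deg e p.1 == i) && (deg e p.2 == j)) ||
      ((deg e p.1 == j) && (deg e p.2 == i))]|.

Definition CTG e : Prop :=
  [/\ simple_graph e, gconnected e, nedges e = n.+2 &
      forall u, (deg e u <= 4)%N].

Definition SOred (R : rcfType) e : R :=
  \sum_(p in edgeset e)
     Num.sqrt (((deg e p.1)%:R - 1) ^+ 2 + ((deg e p.2)%:R - 1) ^+ 2).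

(* G has degree counts nv i (1 <= i <= 4) and edge counts ms i j
   (1 <= i <= j <= 4); integers so that "negative" prescribed values
   are not silently truncated *)
Definition has_profile e (nv : nat -> int) (ms : nat -> nat -> int) : Prop :=
  (forall i, (1 <= i <= 4)%N -> (nverts_deg e i)%:Z = nv i) /\
  (forall i j, (1 <= i)%N -> (i <= j)%N -> (j <= 4)%N ->
     (medges e i j)%:Z = ms i j).

Definition gamma_nv (i : nat) : int :=
  match i with 2 => n%:Z - 4 | 3 => 4 | _ => 0 end.
Definition gamma_ms (j : nat) (a b : nat) : int :=
  match a, b with
  | 2, 3 => (2 + 2 * j)%:Z
  | 3, 3 => 5 - j%:Z
  | 2, 2 => n%:Z - 5 - j%:Z
  | _, _ => 0 end.
Definition gamma (j : nat) e : Prop :=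
  CTG e /\ has_profile e gamma_nv (gamma_ms j).

Definition gamma65_nv (i : nat) : int :=
  match i with 1 => 1 | 2 => n%:Z - 6 | 3 => 5 | _ => 0 end.
Definition gamma65_ms (a b : nat) : int :=
  match a, b with
  | 1, 2 => 1
  | 2, 3 => 1
  | 3, 3 => 7
  | 2, 2 => n%:Z - 7
  | _, _ => 0 end.
Definition gamma65 e : Prop :=
  CTG e /\ has_profile e gamma65_nv gamma65_ms.

End Graphs.

From mathcomp Require Import all_boot all_order all_algebra.
From mathcomp Require Import ring lra zify.
Import Order.TTheory GRing.Theory Num.Theory.

Set Implicit Arguments.
Unset Strict Implicit.
Unset Printing Implicit Defensive.

(* When every degree lies in 1..4, grouping the edges by the degrees of their
   ends gives SO_red(G) = (n+2) f(2,2) + sum_{i<=j} m_{i,j} (f(i,j) - f(2,2)),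
   with f(a,b) = sqrt((a-1)^2 + (b-1)^2).  On gamma_{9+j} this excess is
   (2+2j)(f(2,3) - f(2,2)) + (5-j)(f(3,3) - f(2,2)), which grows with j since
   3 sqrt 2 < 2 sqrt 5, and gamma_65 beats gamma_14.  For any other chemical
   tricyclic graph, the handshake identities (one per degree, together with
   n_3 + 2 n_4 = n_1 + 4) leave only a few degree patterns; bounding each
   f(i,j) - f(2,2) below to two decimals, integer linear arithmetic shows that
   the excess beats that of gamma_65.  Connectivity enters twice: every vertex
   has degree at least 1, and when n_3 = 4 and n_1 = n_4 = 0 the four cubic
   vertices cannot form a K4 component, which puts G in some gamma_{9+j}. *)

Definition class_pairs : seq (nat * nat) :=
  [:: (1, 1); (1, 2); (1, 3); (1, 4); (2, 2); (2, 3); (2, 4); (3, 3); (3, 4); (4, 4)].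

Lemma mem_class_pairs i j : ((i, j) \in class_pairs) = (0 < i <= j) && (j <= 4).
Proof. by case: i => [|[|[|[|[|i]]]]]; case: j => [|[|[|[|[|j]]]]]; rewrite ?andbF. Qed.

Lemma class_pairs_ind (P : nat -> nat -> Prop) :
  P 1 1 -> P 1 2 -> P 1 3 -> P 1 4 -> P 2 2 -> P 2 3 -> P 2 4 -> P 3 3 -> P 3 4 -> P 4 4 ->
  forall ij, ij \in class_pairs -> P ij.1 ij.2.
Proof.
move=> P11 P12 P13 P14 P22 P23 P24 P33 P34 P44 [a b]; rewrite mem_class_pairs.
by case: a => [|[|[|[|[|a]]]]]; case: b => [|[|[|[|[|b]]]]]; rewrite ?andbF => // _.
Qed.

Section DegreeClasses.
Variables (n : nat) (e : rel 'I_n).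
Local Notation deg := (deg e).
Local Notation m := (medges e).
Local Notation nv := (nverts_deg e).

Lemma medgesC (i j : nat) : m i j = m j i.
Proof. by apply: eq_card => p; rewrite !inE orbC. Qed.

Lemma handshake (h : 'I_n -> nat) : simple_graph e ->
  \sum_(p in edgeset e) (h p.1 + h p.2) = \sum_u h u * deg u.
Proof.
move=> [esym eirr].
have -> : \sum_u h u * deg u = \sum_u \sum_(v | e u v) h u.
  by apply: eq_bigr => u _; rewrite sum_nat_cond_const mulnC.
rewrite pair_big_dep /= [RHS](bigID (fun p : 'I_n * 'I_n => p.1 < p.2)) /=.
rewrite [X in _ = _ + X](reindex_inj (h := fun p : 'I_n * 'I_n => (p.2, p.1))); last first.
  by move=> [a b] [c d] /= [-> ->].
rewrite /= big_split /=; congr (_ + _); apply: eq_bigl => p; rewrite inE // (esym p.2).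
have [uv|] //= := boolP (e p.1 p.2).
case: ltngtP => // /val_inj eq_uv.
by move: uv; rewrite eq_uv eirr.
Qed.

Lemma nverts_degE (k : nat) : nv k = \sum_u (deg u == k).
Proof. by rewrite /nverts_deg -sum1_card big_mkcond; apply: eq_bigr => u _; rewrite inE. Qed.

Lemma sum_nverts_deg : (forall u, 0 < deg u <= 4) -> nv 1 + nv 2 + nv 3 + nv 4 = n.
Proof.
move=> deg_range; rewrite !nverts_degE -!big_split /= -[RHS]card_ord -sum1_card.
by apply: eq_bigr => u _; move: (deg_range u); case: (deg u) => [|[|[|[|[|d]]]]].
Qed.

Lemma big_edgeset_deg_classes (V : nmodType) (F : nat -> nat -> V) :
  (forall u, 0 < deg u <= 4) -> (forall a b, F a b = F b a) ->
  (\sum_(p in edgeset e) F (deg p.1) (deg p.2) =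
   \sum_(ij <- class_pairs) F ij.1 ij.2 *+ m ij.1 ij.2)%R.
Proof.
move=> deg_range Fsym.
pose in_class (ij : nat * nat) (p : 'I_n * 'I_n) :=
  ((deg p.1 == ij.1) && (deg p.2 == ij.2)) || ((deg p.1 == ij.2) && (deg p.2 == ij.1)).
transitivity (\sum_(p in edgeset e) \sum_(ij <- class_pairs) F ij.1 ij.2 *+ in_class ij p)%R.
  apply: eq_bigr => p _; rewrite /in_class; move: (deg_range p.1) (deg_range p.2).
  case: (deg p.1) => [|[|[|[|[|a]]]]] //; case: (deg p.2) => [|[|[|[|[|b]]]]] // _ _;
    by rewrite !big_cons big_nil /= ?mulr0n ?mulr1n ?addr0 ?add0r.
rewrite exchange_big; apply: eq_bigr => ij _; rewrite sumrMnr; congr (_ *+ _)%R.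
rewrite /medges -sum1_card big_mkcond [RHS]big_mkcond /=.
by apply: eq_bigr => p _; rewrite !inE /in_class; case: (e p.1 p.2 && _) => //=; case: (_ || _).
Qed.

Lemma sum_medges : (forall u, 0 < deg u <= 4) ->
  \sum_(ij <- class_pairs) m ij.1 ij.2 = nedges e.
Proof.
move=> deg_range; rewrite /nedges -sum1_card.
rewrite (big_edgeset_deg_classes (F := fun _ _ => 1)) //.
by apply: eq_bigr => ij _; rewrite -mulr_natr mul1r natn.
Qed.

Lemma sum_medges_incident (k : nat) : simple_graph e -> (forall u, 0 < deg u <= 4) ->
  \sum_(ij <- class_pairs) ((ij.1 == k) + (ij.2 == k)) * m ij.1 ij.2 = k * nv k.
Proof.
move=> e_simple deg_range.
transitivity (\sum_(ij <- class_pairs) (((ij.1 == k) + (ij.2 == k))%N *+ m ij.1 ij.2)%R).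
  by apply: eq_bigr => ij _; rewrite -mulr_natr natn.
rewrite -(big_edgeset_deg_classes (F := fun a b => (a == k) + (b == k))) //; last first.
  by move=> a b; apply: addnC.
rewrite (handshake (fun u => deg u == k)) // nverts_degE big_distrr /=.
by apply: eq_bigr => u _; rewrite mulnC; case: eqP => [->|]; rewrite ?muln0.
Qed.

Lemma connect_cut_edge (S : {set 'I_n}) x y : connect e x y -> x \in S -> y \notin S ->
  exists u v, [/\ u \in S, v \notin S & e u v].
Proof.
move/connectP=> [p xp ->] {y}.
elim: p x xp => [|z p IHp] x /=; first by move=> _ ->.
move=> /andP[exz zp] xS; have [zS|zS] := boolP (z \in S); first exact: IHp.
by exists x, z.
Qed.

Lemma gconnected_edge_out (S : {set 'I_n}) : gconnected e -> 0 < #|S| < n ->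
  exists u v, [/\ u \in S, v \notin S & e u v].
Proof.
move=> e_conn /andP[]; rewrite card_gt0 => /set0Pn[x xS] S_lt_n.
have /properP[_ [y _ yS]] : S \proper setT by rewrite properEcard subsetT cardsT card_ord.
exact: connect_cut_edge (e_conn x y) xS yS.
Qed.

Lemma gconnected_deg_gt0 : gconnected e -> 1 < n -> forall u, 0 < deg u.
Proof.
move=> e_conn n_gt1 u.
have /(gconnected_edge_out e_conn)[x [y [/set1P -> _ uy]]] : 0 < #|[set u]| < n.
  by rewrite cards1.
by rewrite /deg card_gt0; apply/set0Pn; exists y; rewrite inE.
Qed.

Lemma medges_gt0 u v : simple_graph e -> e u v -> 0 < m (deg u) (deg v).
Proof.
move=> [esym eirr] uv; apply/card_gt0P.
case: (ltngtP u v) => [u_lt_v|v_lt_u|/val_inj eq_uv].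
- by exists (u, v); rewrite !inE /= uv u_lt_v !eqxx.
- by exists (v, u); rewrite !inE /= esym uv v_lt_u !eqxx orbT.
- by move: uv; rewrite eq_uv eirr.
Qed.

Lemma medges_diag_eq0 (i : nat) : nv i <= 1 -> m i i = 0.
Proof.
move=> /card_le1_eqP nv_le1; apply/eqP; rewrite cards_eq0; apply/eqP/setP => p.
rewrite !inE orbb; apply/negbTE/negP => /andP[/andP[_ lt_p] /andP[p1i p2i]].
by move: lt_p; rewrite (nv_le1 p.1 p.2) ?inE ?ltnn.
Qed.

Lemma medges_le_mul (i j : nat) : i != j -> m i j <= nv i * nv j.
Proof.
move=> neq_ij; rewrite /medges /nverts_deg -cardsX.
pose orient (p : 'I_n * 'I_n) := if deg p.1 == i then p else (p.2, p.1).
set C := [set p in edgeset e | _].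
have orient_inj : {in C &, injective orient}.
  move=> [a b] [c d]; rewrite !inE /orient /= => /andP[/andP[_ ab] _] /andP[/andP[_ cd] _].
  by case: (deg a == i); case: (deg c == i) => -[eq1 eq2]; subst => //; lia.
rewrite -(card_in_imset orient_inj); apply/subset_leq_card/subsetP => q /imsetP[p].
rewrite !inE /orient => /andP[_ /orP[] /andP[/eqP p1 /eqP p2]] ->.
  by rewrite p1 eqxx /= p1 p2 !eqxx.
by rewrite p1 [j == i]eq_sym (negbTE neq_ij) /= p1 p2 !eqxx.
Qed.

End DegreeClasses.

Section ChemicalTricyclic.
Variables (n : nat) (e : rel 'I_n).
Hypotheses (n_gt1 : 1 < n) (e_ctg : CTG e).
Local Notation m := (medges e).
Local Notation nv := (nverts_deg e).

Lemma ctg_deg_range u : 0 < deg e u <= 4.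
Proof. by case: e_ctg => _ e_conn _ deg_le4; rewrite deg_le4 gconnected_deg_gt0. Qed.

Lemma ctg_vertex_count : nv 1 + nv 2 + nv 3 + nv 4 = n.
Proof. exact: sum_nverts_deg ctg_deg_range. Qed.

Lemma ctg_edge_count :
  m 1 1 + m 1 2 + m 1 3 + m 1 4 + m 2 2 + m 2 3 + m 2 4 + m 3 3 + m 3 4 + m 4 4 = n.+2.
Proof.
case: e_ctg => _ _ <- _; rewrite -(sum_medges ctg_deg_range).
by rewrite /class_pairs !big_cons big_nil /=; lia.
Qed.

Lemma ctg_incidence_equations :
  [/\ 2 * m 1 1 + m 1 2 + m 1 3 + m 1 4 = nv 1,
      m 1 2 + 2 * m 2 2 + m 2 3 + m 2 4 = 2 * nv 2,
      m 1 3 + m 2 3 + 2 * m 3 3 + m 3 4 = 3 * nv 3 &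
      m 1 4 + m 2 4 + m 3 4 + 2 * m 4 4 = 4 * nv 4].
Proof.
case: e_ctg => e_simple _ _ _.
have incident k := sum_medges_incident k e_simple ctg_deg_range.
move: (incident 1) (incident 2) (incident 3) (incident 4).
by rewrite /class_pairs !big_cons !big_nil /= => *; split; lia.
Qed.

Lemma ctg_deg3_edge_out : 0 < nv 3 < n -> 0 < m 1 3 + m 2 3 + m 3 4.
Proof.
case: e_ctg => e_simple e_conn _ _.
case/(gconnected_edge_out e_conn)=> u [v []]; rewrite !inE => /eqP u3 v3 uv.
have := medges_gt0 e_simple uv; rewrite u3.
move: (ctg_deg_range v) v3; case: (deg e v) => [|[|[|[|[|d]]]]] //= _ _;
  [rewrite medgesC | rewrite medgesC | ]; lia.
Qed.

End ChemicalTricyclic.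

(* [excess_floor a b] is [100 (f(a,b) - f(2,2))] rounded down, computed from
   the bounds of [sombor_weight_bounds] below. *)
Definition excess_floor (a b : nat) : int :=
  match a, b with
  | 1, 1 => -142 | 1, 2 => -42 | 1, 3 => 58 | 1, 4 => 158
  | 2, 3 => 81 | 2, 4 => 174 | 3, 3 => 140 | 3, 4 => 218 | 4, 4 => 282
  | _, _ => 0
  end.

Local Open Scope ring_scope.

Lemma has_profileP n (e : rel 'I_n) nv ms : has_profile e nv ms <->
  all (fun i => (nverts_deg e i)%:Z == nv i) (iota 1 4) /\
  all (fun ij => (medges e ij.1 ij.2)%:Z == ms ij.1 ij.2) class_pairs.
Proof.
split=> [[nvE msE] | [/allP nvE /allP msE]]; split.
- by apply/allP => i; rewrite mem_iota => i_range; apply/eqP/nvE; lia.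
- apply/allP => -[i j]; rewrite mem_class_pairs => /andP[/andP[i_gt0 i_le_j] j_le4].
  exact/eqP/msE.
- by move=> i i_range; apply/eqP/nvE; rewrite mem_iota; lia.
- move=> i j i_gt0 i_le_j j_le4; apply/eqP/(msE (i, j)).
  by rewrite mem_class_pairs i_gt0 i_le_j j_le4.
Qed.

Section Competitors.
Variables (n : nat) (e : rel 'I_n).
Hypotheses (n_ge6 : (6 <= n)%N) (e_ctg : CTG e).
Hypotheses (not_gamma : forall j, (j <= 5)%N -> ~ gamma j e) (not_gamma65 : ~ gamma65 e).
Local Notation m := (medges e).
Local Notation nv := (nverts_deg e).

(* [1036] bounds [100] times the excess of gamma_65 from above. *)
Lemma ctg_excess_floor_gt :
  1036 < \sum_(ij <- class_pairs) (m ij.1 ij.2)%:Z * excess_floor ij.1 ij.2.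
Proof.
have n_gt1 : (1 < n)%N by lia.
have vertices := ctg_vertex_count n_gt1 e_ctg; have edges := ctg_edge_count n_gt1 e_ctg.
have [inc1 inc2 inc3 inc4] := ctg_incidence_equations n_gt1 e_ctg.
have m44_eq0 := @medges_diag_eq0 n e 4; have m34_le := @medges_le_mul n e 3 4 isT.
have deg3_out := ctg_deg3_edge_out n_gt1 e_ctg.
rewrite /class_pairs !big_cons big_nil /=.
case: (ltngtP (nv 4) 1) => [n4_lt1 | n4_gt1 | n4_eq1]; last first.
- move: m34_le; rewrite n4_eq1 muln1 => m34_le.
  have := m44_eq0 (eq_leq n4_eq1); lia.
- lia.
have [n3_ge6 | n3_le5] := leqP 6 (nv 3); first by lia.
have [n3_eq4 | n3_eq5] : nv 3 = 4 \/ nv 3 = 5 by lia.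
  (* no K4 component: some edge leaves the cubic vertices, so m_{3,3} <= 5 *)
  case: (@not_gamma (5 - m 3 3)%N); first lia.
  by split=> //; apply/has_profileP => /=; lia.
have [gamma65_counts | not_gamma65_counts] := boolP [&& m 1 2 == 1 & m 3 3 == 7].
  by case: not_gamma65; split=> //; apply/has_profileP => /=; lia.
lia.
Qed.

End Competitors.

Section SomborExcess.
Variable R : rcfType.

Definition sombor_weight (a b : nat) : R := Num.sqrt ((a%:R - 1) ^+ 2 + (b%:R - 1) ^+ 2).
Local Notation w := sombor_weight.

Definition sombor_excess n (e : rel 'I_n) : R :=
  \sum_(ij <- class_pairs) (medges e ij.1 ij.2)%:R * (w ij.1 ij.2 - w 2 2).

Lemma SOred_excess n (e : rel 'I_n) : (forall u, (0 < deg e u <= 4)%N) ->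
  SOred R e = (nedges e)%:R * w 2 2 + sombor_excess e.
Proof.
move=> deg_range; rewrite -(sum_medges deg_range) natr_sum mulr_suml -big_split /=.
rewrite [LHS](big_edgeset_deg_classes (F := w)) => [|//|a b]; last by rewrite /w addrC.
by apply: eq_bigr => ij _; rewrite -mulrDr addrC subrK mulr_natl.
Qed.

Lemma ctg_SOred n (e : rel 'I_n) : (1 < n)%N -> CTG e ->
  SOred R e = n.+2%:R * w 2 2 + sombor_excess e.
Proof.
move=> n_gt1 e_ctg; rewrite SOred_excess; last exact: ctg_deg_range.
by case: e_ctg => _ _ -> _.
Qed.

Lemma sombor_excess_profile n (e : rel 'I_n) nv ms : has_profile e nv ms ->
  sombor_excess e = \sum_(ij <- class_pairs) (ms ij.1 ij.2)%:~R * (w ij.1 ij.2 - w 2 2).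
Proof.
by case/has_profileP => _ /allP msE; apply: eq_big_seq => ij /msE/eqP <-; rewrite -pmulrn.
Qed.

Definition gamma_excess (j : nat) : R :=
  (2 + 2 * j%:R) * (w 2 3 - w 2 2) + (5 - j%:R) * (w 3 3 - w 2 2).

Definition gamma65_excess : R :=
  (w 1 2 - w 2 2) + (w 2 3 - w 2 2) + 7 * (w 3 3 - w 2 2).

Lemma sombor_excess_gamma n (e : rel 'I_n) j : gamma j e -> sombor_excess e = gamma_excess j.
Proof.
case=> _ /sombor_excess_profile ->; rewrite /class_pairs !big_cons big_nil /=.
rewrite /gamma_excess subrr; ring.
Qed.

Lemma sombor_excess_gamma65 n (e : rel 'I_n) : gamma65 e -> sombor_excess e = gamma65_excess.
Proof.
case=> _ /sombor_excess_profile ->; rewrite /class_pairs !big_cons big_nil /=.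
rewrite /gamma65_excess subrr; ring.
Qed.

Lemma sqrtr_between (a b c : R) : 0 <= a -> 0 <= b -> a ^+ 2 <= c <= b ^+ 2 ->
  a <= Num.sqrt c <= b.
Proof.
move=> a_ge0 b_ge0 /andP[ac cb].
rewrite -[a]ger0_norm // -[b]ger0_norm // -!sqrtr_sqr.
by rewrite !ler_wsqrtr.
Qed.

Lemma sombor_weight1S b : w 1 b.+1 = b%:R.
Proof. by rewrite /w subrr expr0n add0r -natr1 addrK sqrtr_sqr ger0_norm. Qed.

Lemma sombor_weight_bounds :
  [/\ 141 / 100 <= w 2 2 <= 142 / 100, 223 / 100 <= w 2 3 <= 224 / 100,
      282 / 100 <= w 3 3 <= 283 / 100, 316 / 100 <= w 2 4 <= 317 / 100 &
      360 / 100 <= w 3 4 <= 361 / 100 /\ 424 / 100 <= w 4 4 <= 425 / 100].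
Proof. by do ![split]; apply: sqrtr_between; lra. Qed.

Lemma excess_floor_le ij : ij \in class_pairs ->
  (excess_floor ij.1 ij.2)%:~R <= 100 * (w ij.1 ij.2 - w 2 2).
Proof.
have [w22 w23 w33 w24 [w34 w44]] := sombor_weight_bounds.
move: ij; refine (class_pairs_ind
  (P := fun a b => is_true ((excess_floor a b)%:~R <= 100 * (w a b - w 2 2))) _ _ _ _ _ _ _ _ _ _).
all: rewrite [excess_floor _ _]/= ?sombor_weight1S; lra.
Qed.

Lemma excess_floor_le_sombor_excess n (e : rel 'I_n) :
  (\sum_(ij <- class_pairs) (medges e ij.1 ij.2)%:Z * excess_floor ij.1 ij.2)%:~R
    <= 100 * sombor_excess e.
Proof.
rewrite rmorph_sum mulr_sumr /sombor_excess !big_seq; apply: ler_sum => ij /excess_floor_le floor_le.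
by rewrite rmorphM /= -pmulrn mulrCA ler_wpM2l.
Qed.

Lemma gamma_excess_ltS j : gamma_excess j < gamma_excess j.+1.
Proof.
have [w22 w23 w33 _ _] := sombor_weight_bounds.
have -> : gamma_excess j.+1 = gamma_excess j + (2 * (w 2 3 - w 2 2) - (w 3 3 - w 2 2)).
  by rewrite /gamma_excess -natr1; ring.
rewrite ltrDl; lra.
Qed.

Lemma gamma_excess5_lt_gamma65 : gamma_excess 5 < gamma65_excess.
Proof.
have [w22 w23 w33 _ _] := sombor_weight_bounds.
rewrite /gamma_excess /gamma65_excess sombor_weight1S; lra.
Qed.

Lemma gamma65_excess_lt_sombor_excess n (e : rel 'I_n) : (6 <= n)%N -> CTG e ->
  (forall j, (j <= 5)%N -> ~ gamma j e) -> ~ gamma65 e -> gamma65_excess < sombor_excess e.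
Proof.
move=> n_ge6 e_ctg not_gamma not_gamma65.
have := ctg_excess_floor_gt n_ge6 e_ctg not_gamma not_gamma65.
rewrite -(ltr_int R) => /lt_le_trans/(_ (excess_floor_le_sombor_excess e)).
have [w22 w23 w33 _ _] := sombor_weight_bounds.
rewrite /gamma65_excess sombor_weight1S; lra.
Qed.

End SomborExcess.

Theorem theorem3p13 (R : rcfType) (n : nat) (hn : (6 <= n)%N)
  (G1 G2 G3 G4 G5 G6 G7 G : rel 'I_n) :
  gamma 0 G1 -> gamma 1 G2 -> gamma 2 G3 -> gamma 3 G4 ->
  gamma 4 G5 -> gamma 5 G6 -> gamma65 G7 ->
  CTG G ->
  ~ gamma 0 G -> ~ gamma 1 G -> ~ gamma 2 G -> ~ gamma 3 G ->
  ~ gamma 4 G -> ~ gamma 5 G -> ~ gamma65 G ->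
  SOred R G1 < SOred R G2 /\ SOred R G2 < SOred R G3 /\
  SOred R G3 < SOred R G4 /\ SOred R G4 < SOred R G5 /\
  SOred R G5 < SOred R G6 /\ SOred R G6 < SOred R G7 /\
  SOred R G7 < SOred R G.
Proof.
move=> G1_0 G2_1 G3_2 G4_3 G5_4 G6_5 G7_65 G_ctg G_0 G_1 G_2 G_3 G_4 G_5 G_65.
have n_gt1 : (1 < n)%N by apply: leq_trans hn.
have SO_gamma j (H : rel 'I_n) :
    gamma j H -> SOred R H = n.+2%:R * sombor_weight R 2 2 + gamma_excess R j.
  by move=> H_j; rewrite ctg_SOred ?(sombor_excess_gamma _ H_j) //; case: H_j.
rewrite (SO_gamma 0 G1) // (SO_gamma 1 G2) // (SO_gamma 2 G3) // (SO_gamma 3 G4) //.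
rewrite (SO_gamma 4 G5) // (SO_gamma 5 G6) //.
rewrite !ctg_SOred ?(sombor_excess_gamma65 _ G7_65) //; last by case: G7_65.
rewrite !ltrD2l; do 5!(split; first exact: gamma_excess_ltS).
split; first exact: gamma_excess5_lt_gamma65.
by apply: gamma65_excess_lt_sombor_excess => // -[|[|[|[|[|[|j]]]]]].
Qed.
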